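(* Let $(\Theta,d)$ be a connected locally compact metric space and $(X,\mathcal{B},P)$ a probability space. Let $X_1,X_2,\dots$ be i.i.d. with law $P$ and $P_n:=n^{-1}\sum_{j=1}^n\delta_{X_j}$. Let $h:X\times\Theta\to\mathbb{R}$ be such that $h(\cdot,\theta)$ is measurable for each $\theta\in\Theta$. Assume: (i) $\theta\mapsto Ph(\theta):=\int h(x,\theta)\,dP(x)\in(-\infty,+\infty]$ is well defined and uniminimal on $\Theta$, with minimum at $\theta_0$; (ii) outside events $A_n$ with $\Pr(A_n)\to0$ as $n\to\infty$, the function $\theta\mapsto P_nh(\theta):=\int h(x,\theta)\,dP_n(x)$ is uniminimal on $\Theta$; (iii) for some neighborhood $U$ of $\theta_0$, $\{h(\cdot,\theta):\theta\in U\}$ is a Glivenko–Cantelli class for $P$. Then $\theta_0$ is a definite M-limit for $P$ with respect to $h$, i.e. for every neighborhood $U$ of $\theta_0$ there is $\varepsilon>0$ such that $$(P^n)^*\Big\{\inf\{P_nh(\theta):\theta\notin U\}\le\varepsilon+\inf\{P_nh(\phi):\phi\in U\}\Big\}\to0\quad(n\to\infty),$$ where $(P^n)^*$ denotes outer probability; and $\theta_0$ is the M-functional of $P$ for $h$, i.e. $Ph(\theta)$ is defined, satisfies $-\infty<Ph(\theta)\le+\infty$ for all $\theta$, and is minimized uniquely at $\theta=\theta_0$.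
   Context: A function $f:\Theta\to(-\infty,+\infty]$ is uniminimal iff it is lower semicontinuous, has a unique relative (local) minimum at some point, and for every $t\in\mathbb{R}$ the sublevel set $\{\theta: f(\theta)\le t\}$ is connected. A class $\mathcal{F}$ of $P$-integrable functions is a Glivenko–Cantelli class for $P$ if $\sup\{|\int f\,d(P_n-P)|: f\in\mathcal{F}\}\to0$ almost surely as $n\to\infty$ (the supremum being assumed measurable). *)

From HB Require Import structures.
From mathcomp Require Import all_boot all_order all_algebra.
From mathcomp Require Import all_classical all_reals all_analysis.
From mathcomp Require Import measurable_realfun.
Set Implicit Arguments. Unset Strict Implicit. Unset Printing Implicit Defensive.
Import Order.TTheory GRing.Theory Num.Theory.
Import numFieldNormedType.Exports.
Local Open Scope classical_set_scope.
Local Open Scope ring_scope.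

Section Uniminimal.
Context {R : realType} {Θ : topologicalType}.
Local Open Scope ereal_scope.

Definition is_rel_min (f : Θ -> \bar R) (θ : Θ) : Prop :=
  \forall φ \near θ, f θ <= f φ.

Definition uniminimal_at (f : Θ -> \bar R) (θ0 : Θ) : Prop :=
  [/\ lower_semicontinuous f,
      (forall θ, is_rel_min f θ <-> θ = θ0) &
      (forall t : R, connected [set θ | f θ <= t%:E])].

Definition uniminimal (f : Θ -> \bar R) : Prop := exists θ0, uniminimal_at f θ0.
End Uniminimal.

Section Sample.
Context {R : realType} {dO dX : measure_display}
  {Ω : measurableType dO} {X : measurableType dX}.
Local Open Scope ereal_scope.

(* X_0, X_1, ... (the paper's X_1, X_2, ...) are i.i.d. with law P under Q *)
Definition iid (Q : probability Ω R) (P : probability X R) (Xs : nat -> Ω -> X) :=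
  (forall i, measurable_fun setT (Xs i)) /\
  forall (n : nat) (B : nat -> set X), (forall i, measurable (B i)) ->
    Q (\bigcap_(i in `I_n) (Xs i @^-1` B i)) = \prod_(i < n) P (B i).

(* the sigma-algebra generated by the first n observations X_0,...,X_{n-1}
   (the image of the measurable sets of X^n) *)
Definition sampleF (Xs : nat -> Ω -> X) (n : nat) : set (set Ω) :=
  <<s \bigcup_(i in `I_n) [set Xs i @^-1` B | B in [set B : set X | measurable B]] >>.

(* outer probability (P^n)^* of an event determined by the first n
   observations: infimum of Q(C) over covering events C measurable with
   respect to the first n observations *)
Definition outerP (Q : probability Ω R) (Xs : nat -> Ω -> X) (n : nat) (A : set Ω) : \bar R :=
  ereal_inf [set Q C | C in [set C | sampleF Xs n C /\ A `<=` C]].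

Definition Pn (Xs : nat -> Ω -> X) (n : nat) (ω : Ω) (f : X -> R) : R :=
  (n%:R^-1 * \sum_(j < n) f (Xs j ω))%R.

(* Glivenko-Cantelli class for P (supremum assumed measurable) *)
Definition GC_class (Q : probability Ω R) (P : probability X R) (Xs : nat -> Ω -> X)
    (F : set (X -> R)) : Prop :=
  let S n ω := ereal_sup [set `| (Pn Xs n ω f)%:E - \int[P]_x (f x)%:E | | f in F] in
  [/\ (forall f, F f -> P.-integrable setT (fun x => (f x)%:E)),
      (forall (n : nat) (B : set (\bar R)), measurable B -> sampleF Xs n (S n @^-1` B)) &
      {ae Q, forall ω, S ^~ ω @ \oo --> 0}].
End Sample.

From HB Require Import structures.
From mathcomp Require Import all_boot all_order all_algebra.
From mathcomp Require Import all_classical all_reals all_analysis.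
From mathcomp Require Import measurable_realfun.
From mathcomp Require Import lra.
Set Implicit Arguments. Unset Strict Implicit. Unset Printing Implicit Defensive.
Import Order.TTheory GRing.Theory Num.Theory.
Import numFieldNormedType.Exports.
Local Open Scope classical_set_scope.
Local Open Scope ring_scope.
Local Open Scope ereal_scope.

(* Lower semicontinuity of [Ph] on the compact boundary [B] of a small closed
   ball [K] around [θ0] gives a gap: [Ph >= Ph θ0 + 4e] on [B]. By the
   Glivenko-Cantelli hypothesis, outside events of vanishing probability
   [|P_n h - Ph| < e] on [K], so [P_n h > P_n h θ0 + 2e] on [B]. The sublevel
   set [{P_n h <= P_n h θ0 + 2e}] of the uniminimal function [P_n h] is
   connected, contains [θ0] and misses [B], hence lies in [K], inside [U]. So
   the infimum of [P_n h] off [U] is at least [P_n h θ0 + 2e], which exceeds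
   [e] plus its infimum on [U]. *)

Lemma integral_gtNy_negpart (R : realType) d (X : measurableType d)
    (mu : {measure set X -> \bar R}) (g : X -> R) :
  \int[mu]_x (Num.max (- g x) 0)%:E < +oo -> -oo < \int[mu]_x (g x)%:E.
Proof.
move=> neg_lty; rewrite integralE.
have -> : \int[mu]_x ((EFin \o g)^\- x) = \int[mu]_x (Num.max (- g x) 0)%:E.
  by rewrite funerneg.
have pos_ge0 : 0 <= \int[mu]_x ((EFin \o g)^\+ x).
  by apply: integral_ge0 => x _; exact: funepos_ge0.
by apply: (lt_le_trans _ (leeB pos_ge0 (lexx _))); rewrite sub0e lteNr.
Qed.

Lemma uniminimal_at_lt (R : realType) (T : topologicalType) (f : T -> \bar R) (t0 : T) :
  accessible_space T -> uniminimal_at f t0 -> f t0 \is a fin_num ->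
  forall t, t <> t0 -> f t0 < f t.
Proof.
move=> T1 [_ rel_minE sublevel_conn] f0_fin t t_neq; rewrite ltNge; apply/negP => ft_le.
pose M := interior [set p | f t0 <= f p].
(* [t0] is relatively open in its sublevel set: a point of [M] in it would be
   another relative minimum. *)
have M_sublevel p : M p -> f p <= f t0 -> p = t0.
  by move=> Mp fp_le; apply/rel_minE; apply: filterS Mp => q /=; exact: le_trans.
have := sublevel_conn (fine (f t0)); rewrite fineK // => /(_ [set t0]) sublevel_t0.
suff t0E : [set t0] = [set p | f p <= f t0].
  by apply: t_neq; have : [set p | f p <= f t0] t := ft_le; rewrite -t0E.
apply: sublevel_t0; first by exists t0.
- exists M; first exact: open_interior.
  apply/seteqP; split => [p /= -> | p /= [fp_le Mp]]; last exact: M_sublevel.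
  by split => //; apply/rel_minE.
- exists [set t0]; first exact: accessible_closed_set1.
  by apply/seteqP; split => [p /= -> | p /= []].
Qed.

Lemma lower_semicontinuous_compact_gt (R : realType) (T : topologicalType)
    (f : T -> \bar R) (K : set T) (c : R) :
  compact K -> lower_semicontinuous f -> (forall t, K t -> c%:E < f t) ->
  exists2 g : R, (0 < g)%R & forall t, K t -> (c + g)%:E < f t.
Proof.
move=> /compact_near_coveringP cK lsc c_lt.
have [t Kt|k _ cover] := cK nat \oo (fun k t => (c + k.+1%:R^-1)%:E < f t) _; last first.
  by exists (k.+1%:R^-1)%R => //; apply: cover => /=.
have [k0 ck0_lt] : exists k0 : nat, (c + k0.+1%:R^-1)%:E < f t.
  move: (c_lt t Kt); case: (f t) => [r| |] //= cr.
    rewrite lte_fin in cr; have [k hk] := ltr_add_invr cr.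
    by exists k; rewrite lte_fin.
  by exists 0%N; rewrite ltry.
have [V nV fV] := lsc t _ ck0_lt.
exists (V, [set k | (k0 <= k)%N]); first by split => //; exists k0.
move=> [y k] /= [Vy k0k]; apply: le_lt_trans (fV y Vy).
by rewrite lee_fin lerD2l lef_pV2 ?posrE// ler_nat ltnS.
Qed.

Lemma uniminimal_boundary_gap (R : realType) (T : topologicalType)
    (f : T -> \bar R) (t0 : T) (K : set T) :
  accessible_space T -> uniminimal_at f t0 -> compact K -> nbhs t0 K ->
  (forall t, K t -> f t \is a fin_num) ->
  exists2 g : R, (0 < g)%R & forall t, K t -> ~ K° t -> (fine (f t0) + g < fine (f t))%R.
Proof.
move=> T1 f_unimin cK nK K_fin.
have cB : compact (K `&` ~` K°).
  by apply: compact_closedI => //; apply: open_closedC; exact: open_interior.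
have [lsc _ _] := f_unimin.
have [|g g0 Bg] := lower_semicontinuous_compact_gt cB lsc (c := fine (f t0)).
  have f0_fin := K_fin _ (nbhs_singleton nK).
  move=> t [Kt nKt]; rewrite fineK //.
  by apply: (uniminimal_at_lt T1 f_unimin f0_fin) => t_eq; apply: nKt; rewrite t_eq.
exists g => // t Kt nKt.
by rewrite -lte_fin (fineK (K_fin t Kt)); exact: Bg.
Qed.

Lemma locally_compact_compact_nbhs_sub (R : numFieldType) (T : pseudoMetricType R)
    (x : T) (W : set T) :
  locally_compact [set: T] -> nbhs x W ->
  exists K, [/\ nbhs x K, compact K, closed K & K `<=` W].
Proof.
move=> lcT nW; have [K0 nK0 [cK0 _]] := lcT x I; rewrite withinET in nK0.
have [r r0 rWK0] := iffLR (nbhs_ballP _ _) (filterI nW nK0).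
have r20 : (0 < r / 2)%R by rewrite divr_gt0.
pose K := closure (ball x (r / 2)).
have clK : closed K by exact: closed_closure.
have KWK0 : K `<=` W `&` K0.
  move=> y Ky; apply: rWK0; have [z [xz yz]] := Ky _ (nbhsx_ballx y _ r20).
  exact: ball_split xz (ball_sym yz).
exists K; split => //.
- exact: filterS (@subset_closure _ _) (nbhsx_ballx x _ r20).
- by apply: (subclosed_compact clK cK0) => y /KWK0[].
- by move=> y /KWK0[].
Qed.

Lemma connected_sub_interior (T : topologicalType) (Z K : set T) (x : T) :
  connected Z -> Z x -> nbhs x K -> closed K -> Z `&` K `<=` K° -> Z `<=` K°.
Proof.
move=> Zconn Zx nK clK ZK_int.
suff ZE : Z `&` K° = Z by move=> y; rewrite -ZE => -[].
apply: Zconn; first by exists x.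
- by exists K°; first exact: open_interior.
- exists K => //; apply/seteqP; split => y [Zy Ky]; split => //.
    exact: interior_subset.
  exact: ZK_int.
Qed.

Lemma connected_sublevel_inf_ge (R : realType) (T : topologicalType) (f : T -> \bar R)
    (t0 : T) (K U : set T) (t : R) :
  (forall s : R, connected [set θ | f θ <= s%:E]) ->
  nbhs t0 K -> closed K -> K `<=` U ->
  f t0 <= t%:E -> (forall θ, K θ -> ~ K° θ -> t%:E < f θ) ->
  t%:E <= ereal_inf (f @` ~` U).
Proof.
move=> f_conn nK clK KU f0_le K_gt.
have sublevel_int : [set θ | f θ <= t%:E] `<=` K°.
  apply: (connected_sub_interior (f_conn t) f0_le nK clK) => θ [fθ_le Kθ].
  by apply: contrapT => nKθ; move: (K_gt θ Kθ nKθ); rewrite ltNge fθ_le.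
apply: le_ereal_inf_tmp => _ [θ nUθ <-]; rewrite leNgt; apply/negP => fθ_lt.
by apply/nUθ/KU/(@interior_subset _ K); exact: sublevel_int _ (ltW fθ_lt).
Qed.

Lemma inf_gap_of_uniform_approx (R : realType) (T : topologicalType) (p f : T -> R)
    (t0 : T) (K U : set T) (e : R) :
  (forall s : R, connected [set θ | (p θ)%:E <= s%:E]) ->
  nbhs t0 K -> closed K -> K `<=` U ->
  (forall θ, K θ -> `|p θ - f θ| < e)%R ->
  (forall θ, K θ -> ~ K° θ -> f t0 + 4 * e < f θ)%R ->
  e%:E + ereal_inf [set (p θ)%:E | θ in U] < ereal_inf [set (p θ)%:E | θ in ~` U].
Proof.
move=> p_conn nK clK KU close gap.
have Kt0 := nbhs_singleton nK.
have e_gt0 : (0 < e)%R := le_lt_trans (normr_ge0 _) (close _ Kt0).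
have infU_le : ereal_inf [set (p θ)%:E | θ in U] <= (p t0)%:E.
  by apply: ereal_inf_lbound; exists t0 => //; exact: KU.
apply: (le_lt_trans (leeD2l e%:E infU_le)); rewrite -EFinD.
apply: (@lt_le_trans _ _ (p t0 + 2 * e)%:E); first by rewrite lte_fin; lra.
apply: connected_sublevel_inf_ge p_conn nK clK KU _ _.
  by rewrite lee_fin; lra.
move=> θ Kθ nKθ; rewrite lte_fin.
have := close θ Kθ; have := close t0 Kt0; have := gap θ Kθ nKθ.
by rewrite !ltr_norml => ? /andP[? ?] /andP[? ?]; lra.
Qed.

Lemma cvg_prob_of_ae_cvg0 (R : realType) d (Ω : measurableType d) (Q : probability Ω R)
    (S : nat -> Ω -> \bar R) (e : R) : (0 < e)%R ->
  (forall n, measurable [set w | e%:E <= S n w]) ->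
  {ae Q, forall w, S ^~ w @ \oo --> 0} ->
  (fun n => Q [set w | e%:E <= S n w]) @ \oo --> 0.
Proof.
move=> e_gt0 mD [N [mN QN0 sN]].
pose D n := [set w | e%:E <= S n w].
pose E m := \bigcup_(n in [set n | (m <= n)%N]) D n.
have mE m : measurable (E m) by apply: bigcup_measurable => k _; exact: mD.
have cE : Q \o E @ \oo --> Q (\bigcap_m E m).
  apply: nonincreasing_cvg_mu => //.
  - by apply: (le_lt_trans (probability_le1 Q (mE 0%N))); rewrite ltry.
  - exact: bigcap_measurableType.
  move=> m n mn; apply/subsetPset => w [k /= km Dk].
  by exists k => //; exact: leq_trans mn km.
have limsup0 : Q (\bigcap_m E m) = 0.
  apply/eqP; rewrite -measure_le0 -QN0; apply: le_measure; rewrite ?inE //.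
    exact: bigcap_measurableType.
  move=> w Ew; apply: sN => /= /fine_cvgP[S_fin /cvgr_lt /(_ e e_gt0) S_lt].
  have [m _ Sm] := filterI S_fin S_lt.
  have [k /= km Dk] := Ew m I; have [fk ltk] := Sm k km.
  by move: Dk; rewrite /D /= -(fineK fk) lee_fin leNgt ltk.
apply: (@squeeze_cvge _ _ _ R (fun=> 0) _ (Q \o E)); last 2 first.
- exact: cvg_cst.
- by rewrite -limsup0.
near=> n; rewrite measure_ge0 /=; apply: le_measure; rewrite ?inE //.
by move=> w Dw; exists n => /=.
Unshelve. all: by end_near.
Qed.

Section sample.
Context {R : realType} {dO dX : measure_display}
  {Ω : measurableType dO} {X : measurableType dX}.
Variables (Q : probability Ω R) (Xs : nat -> Ω -> X).
Hypothesis mXs : forall i, measurable_fun setT (Xs i).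

Lemma sampleF_measurable n : sampleF Xs n `<=` measurable.
Proof.
apply: smallest_sub; first exact: sigma_algebra_measurable.
by move=> _ [i _ [B mB <-]]; rewrite -[_ @^-1` _]setTI; exact: mXs.
Qed.

Lemma sampleFU n (A B : set Ω) :
  sampleF Xs n A -> sampleF Xs n B -> sampleF Xs n (A `|` B).
Proof.
move=> sA sB; rewrite -bigcup2E; apply: sigma_algebra_bigcup => -[|[|k]] //=.
exact: sigma_algebra0.
Qed.

Lemma outerP_le n (A C : set Ω) : sampleF Xs n C -> A `<=` C -> outerP Q Xs n A <= Q C.
Proof. by move=> sC AC; apply: ereal_inf_lbound; exists C. Qed.

Lemma outerP_ge0 n (A : set Ω) : 0 <= outerP Q Xs n A.
Proof. by apply: le_ereal_inf_tmp => _ [C _ <-]; exact: measure_ge0. Qed.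

Lemma outerP_cvg0 (E A D : nat -> set Ω) :
  (forall n, sampleF Xs n (A n)) -> (forall n, sampleF Xs n (D n)) ->
  Q \o A @ \oo --> 0 -> Q \o D @ \oo --> 0 ->
  (forall n, E n `<=` A n `|` D n) ->
  (fun n => outerP Q Xs n (E n)) @ \oo --> 0.
Proof.
move=> sA sD QA QD EAD.
apply: (@squeeze_cvge _ _ _ R (fun=> 0) _ (fun n => Q (A n) + Q (D n))); last 2 first.
- exact: cvg_cst.
- by rewrite -[X in _ --> X](adde0 0); apply: cvgeD.
near=> n; rewrite outerP_ge0 /=.
apply: le_trans (outerP_le (sampleFU (sA n) (sD n)) (EAD n)) _.
by apply: measureU2; exact: sampleF_measurable.
Unshelve. all: by end_near.
Qed.

Lemma GC_class_uniform_approx (P : probability X R) (F : set (X -> R)) (e : R) :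
  (0 < e)%R -> GC_class Q P Xs F ->
  exists D : nat -> set Ω, [/\ forall n, sampleF Xs n (D n), Q \o D @ \oo --> 0 &
    forall n w f, ~ D n w -> F f -> (`|Pn Xs n w f - fine (\int[P]_x (f x)%:E)| < e)%R].
Proof.
move=> e_gt0 [F_int S_meas S_ae].
pose S n w := ereal_sup [set `|(Pn Xs n w f)%:E - \int[P]_x (f x)%:E| | f in F].
pose D n := [set w | e%:E <= S n w].
have sD n : sampleF Xs n (D n).
  suff -> : D n = S n @^-1` `[e%:E, +oo[%classic by apply: S_meas; exact: emeasurable_itv.
  by apply/seteqP; split => w; rewrite /= in_itv /= andbT.
exists D; split => //.
  by apply: cvg_prob_of_ae_cvg0 => // n; exact: sampleF_measurable (sD n).
move=> n w f nDw Ff; have f_fin := integrable_fin_num measurableT (F_int f Ff).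
have S_lt : S n w < e%:E by rewrite ltNge; apply/negP.
have S_ge : `|(Pn Xs n w f)%:E - \int[P]_x (f x)%:E| <= S n w.
  by apply: ereal_sup_ubound; exists f.
by move: (le_lt_trans S_ge S_lt); rewrite -(fineK f_fin) -EFinB /= lte_fin.
Qed.

End sample.

Theorem theorem2 (R : realType) (Θ : pseudoMetricType R)
  (dX dO : measure_display) (X : measurableType dX) (Ω : measurableType dO)
  (P : probability X R) (Q : probability Ω R) (Xs : nat -> Ω -> X)
  (h : X -> Θ -> R) (θ0 : Θ) :
  hausdorff_space Θ ->
  connected [set: Θ] ->
  locally_compact [set: Θ] ->
  iid Q P Xs ->
  (forall θ, measurable_fun setT (fun x => h x θ)) ->
  (* (i) Ph is well defined in (-oo,+oo] and uniminimal with minimum at θ0 *)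
  (forall θ, (\int[P]_x (Num.max (- h x θ)%R 0%R)%:E < +oo)%E) ->
  uniminimal_at (fun θ => \int[P]_x (h x θ)%:E) θ0 ->
  (* (ii) outside events A_n with Pr(A_n) -> 0, P_n h is uniminimal *)
  (exists A : nat -> set Ω,
     [/\ (forall n, sampleF Xs n (A n)),
         Q \o A @ \oo --> 0%E &
         (forall n ω, ~ A n ω -> uniminimal (fun θ => (Pn Xs n ω (h ^~ θ))%:E))]) ->
  (* (iii) GC class on a neighbourhood of θ0 *)
  (exists2 U, nbhs θ0 U & GC_class Q P Xs [set h ^~ θ | θ in U]) ->
  (* conclusion: definite M-limit ... *)
  (forall U, nbhs θ0 U -> exists2 eps : R, (0 < eps)%R &
     (fun n => outerP Q Xs n
        [set ω | (ereal_inf [set (Pn Xs n ω (h ^~ θ))%:E | θ in ~` U]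
                  <= eps%:E + ereal_inf [set (Pn Xs n ω (h ^~ φ))%:E | φ in U])%E])
     @ \oo --> 0%E)
  /\ (* ... and M-functional *)
  ((forall θ, (\int[P]_x (Num.max (- h x θ)%R 0%R)%:E < +oo)%E /\
              (-oo < \int[P]_x (h x θ)%:E)%E) /\
   (forall θ, θ <> θ0 -> (\int[P]_x (h x θ0)%:E < \int[P]_x (h x θ)%:E)%E)).
Proof.
move=> hT _ lcT [mXs _] _ negpart_lty Ph_unimin [A [sA QA Pn_unimin]] [V nV GC].
have T1 := hausdorff_accessible hT.
have Ph_fin θ : V θ -> \int[P]_x (h x θ)%:E \is a fin_num.
  move: GC => [GC_int _ _] Vθ.
  by apply: integrable_fin_num => //; apply: GC_int; exists θ.
split; last first.
  split=> [θ|]; first by split; [exact: negpart_lty | exact: integral_gtNy_negpart].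
  exact: uniminimal_at_lt T1 Ph_unimin (Ph_fin _ (nbhs_singleton nV)).
move=> U nU.
have [K [nK cK clK KUV]] := locally_compact_compact_nbhs_sub lcT (filterI nU nV).
have [g g0 K_gap] := uniminimal_boundary_gap T1 Ph_unimin cK nK
  (fun θ Kθ => Ph_fin θ (KUV θ Kθ).2).
have e_gt0 : (0 < g / 4)%R by rewrite divr_gt0.
exists (g / 4)%R => //.
have [D [sD QD D_close]] := GC_class_uniform_approx mXs e_gt0 GC.
apply: (outerP_cvg0 mXs sA sD QA QD) => n w /= bad.
have [Aw|nAw] := pselect (A n w); [by left | right].
apply: contrapT => nDw; move: bad; apply/negP; rewrite -ltNge.
have [_ [_ _ Pn_conn]] := Pn_unimin n w nAw.
apply: (inf_gap_of_uniform_approx (f := fun θ => fine (\int[P]_x (h x θ)%:E)))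
  Pn_conn nK clK (fun θ Kθ => (KUV θ Kθ).1) _ _.
- by move=> θ Kθ; apply: (D_close _ _ (h^~ θ) nDw); exists θ => //; case: (KUV θ Kθ).
- by move=> θ Kθ nKθ; have := K_gap θ Kθ nKθ; lra.
Qed.
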